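(* Let $m\geq 13$ and $k\geq 1$ be integers and let $c(x)=1+\sum_{j\in\{1,2,5,6\}}(x^j+x^{m-j})\in\mathbb{F}_2[x]$. Then $\gcd(c(x^k),x^m-1)=1$ if and only if $\gcd(m,3k)=\gcd(m,k)$.
   Context: All polynomials are over $\mathbb{F}_2$. *)

From HB Require Import structures.
From mathcomp Require Import all_boot all_order all_algebra.
Set Implicit Arguments. Unset Strict Implicit. Unset Printing Implicit Defensive.
Import GRing.Theory.
Local Open Scope ring_scope.

Definition cpoly (m : nat) : {poly 'F_2} :=
  1 + \sum_(j <- [:: 1%N; 2%N; 5%N; 6%N]) ('X^j + 'X^(m - j)).

(* Write Z = x^k.  Multiplying c(Z) by the unit Z^6 (a power of x is prime to
   x^m - 1) and reducing Z^m = x^(km) to 1 modulo x^m - 1 gives, in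
   characteristic 2,
       c(Z) Z^6 = (1 + Z + Z^2)^2 P(Z)   mod  x^m - 1,
   with P(Z) = (1 + Z + Z^2)(1 + Z^3 + Z^6) = (Z^9 - 1)/(Z - 1).  Hence
   c(Z) is prime to x^m - 1 iff P(Z) is.  The latter is decided by a general
   fact about "cyclotomic quotients": if P (x^k - 1) = x^N - 1 and P is prime
   to x^k - 1, then P is prime to x^m - 1 iff gcd(m, N) = gcd(m, k).  Its
   proof rests on the classical divisibility theory of the binomials x^n - 1
   (x^c - 1 | x^a - 1 iff c | a, and common divisors of x^a - 1 and x^b - 1
   divide x^gcd(a,b) - 1).  Finally gcd(m, 9k) = gcd(m, k) is equivalent to
   gcd(m, 3k) = gcd(m, k), an elementary fact about gcds. *)

From HB Require Import structures.
From mathcomp Require Import all_boot all_order all_algebra.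
From mathcomp Require Import zify ring.
Set Implicit Arguments. Unset Strict Implicit. Unset Printing Implicit Defensive.
Local Open Scope ring_scope.
Import GRing.Theory.

Lemma gcdn_mul_gcd (m a k : nat) : gcdn m (a * k) = gcdn m (a * gcdn m k).
Proof.
have gcd_m_am : gcdn m (a * m) = m by apply/gcdn_idPl; rewrite dvdn_mull.
by rewrite muln_gcdr gcdnA gcd_m_am.
Qed.

Lemma gcdn_mul_sqr (m a k : nat) :
  gcdn m (a * (a * k)) = gcdn m k <-> gcdn m (a * k) = gcdn m k.
Proof.
split=> [Ea2|Ea].
- have dak : (gcdn m (a * k) %| gcdn m (a * (a * k)))%N.
    by rewrite dvdn_gcd dvdn_gcdl dvdn_mull // dvdn_gcdr.
  apply/eqP; rewrite eqn_dvd -{1}Ea2 dak.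
  by rewrite dvdn_gcd dvdn_gcdl dvdn_mull // dvdn_gcdr.
- by rewrite gcdn_mul_gcd Ea -gcdn_mul_gcd Ea.
Qed.

Section BinomialDivisibility.

Variable R : idomainType.
Implicit Types (d P : {poly R}) (a b c k m N : nat).

Lemma dvdp_Xn_sub1_mul c b : ('X^c - 1 : {poly R}) %| 'X^(c * b) - 1.
Proof. by rewrite exprM [in X in _ %| X]subrX1 dvdp_mulr. Qed.

Lemma dvdp_Xn_sub1 c a : (c %| a)%N -> ('X^c - 1 : {poly R}) %| 'X^a - 1.
Proof. by case/dvdnP=> b ->; rewrite mulnC dvdp_Xn_sub1_mul. Qed.

(* A common divisor of x^a - 1 and x^b - 1 divides x^gcd(a,b) - 1: by Bezout,
   x^(ua) - 1 = x^g (x^(vb) - 1) + (x^g - 1). *)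
Lemma dvdp_Xgcdn_sub1 d a b : (0 < a)%N ->
  d %| 'X^a - 1 -> d %| 'X^b - 1 -> d %| 'X^(gcdn a b) - 1.
Proof.
move=> a_gt0 da db; have [u v Bezout _] := egcdnP b a_gt0.
have dua : d %| 'X^(u * a) - 1 by rewrite (dvdp_trans da) // mulnC dvdp_Xn_sub1_mul.
have dvb : d %| 'X^(v * b) - 1 by rewrite (dvdp_trans db) // mulnC dvdp_Xn_sub1_mul.
have split_ua : ('X^(u * a) - 1 : {poly R}) =
    'X^(gcdn a b) * ('X^(v * b) - 1) + ('X^(gcdn a b) - 1).
  by rewrite Bezout exprD; ring.
by move: dua; rewrite split_ua dvdp_addr // dvdp_mull.
Qed.

Lemma dvdp_Xn_sub1P c a : (0 < c)%N ->
  ('X^c - 1 : {poly R}) %| 'X^a - 1 = (c %| a)%N.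
Proof.
move=> c_gt0; apply/idP/idP=> [dca|]; last exact: dvdp_Xn_sub1.
have g_gt0 : (0 < gcdn c a)%N by rewrite gcdn_gt0 c_gt0.
have := dvdp_leq _ (dvdp_Xgcdn_sub1 c_gt0 (dvdpp _) dca).
rewrite -size_poly_eq0 !size_XnsubC // ltnS => /(_ isT) c_le_g.
have g_le_c : (gcdn c a <= c)%N by rewrite dvdn_leq ?dvdn_gcdl.
by apply/gcdn_idPl/eqP; rewrite eqn_leq g_le_c c_le_g.
Qed.

(* A power of x is prime to x^m - 1, which does not vanish at 0. *)
Lemma coprimep_Xn_Xm_sub1 n m : (0 < m)%N -> coprimep ('X^n : {poly R}) ('X^m - 1).
Proof.
move=> m_gt0; case: n => [|n]; first by rewrite expr0 coprime1p.
rewrite coprimep_pexpl // coprimep_sym coprimepX /root !hornerE expr0n.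
by rewrite eqn0Ngt m_gt0 sub0r oppr_eq0 oner_eq0.
Qed.

(* Indeed
   gcd(P, x^m - 1) = gcd(P, x^gcd(N,m) - 1), and x^gcd(N,m) - 1 is prime to P
   iff it divides x^k - 1 (Gauss). *)
Lemma coprimep_cyclotomic_quotient P k N m : (0 < m)%N -> (k %| N)%N ->
  P * ('X^k - 1) = 'X^N - 1 -> coprimep P ('X^k - 1) ->
  coprimep P ('X^m - 1) = (gcdn m N == gcdn m k).
Proof.
move=> m_gt0 dkN PE copPk.
have dmk_mN : (gcdn m k %| gcdn m N)%N.
  by rewrite dvdn_gcd dvdn_gcdl (dvdn_trans (dvdn_gcdr _ _)).
apply/idP/eqP=> [copPm|EmN].
- set g := gcdn m N; have g_gt0 : (0 < g)%N by rewrite gcdn_gt0 m_gt0.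
  have dgm : ('X^g - 1 : {poly R}) %| 'X^m - 1 by apply: dvdp_Xn_sub1; rewrite dvdn_gcdl.
  have copgP : coprimep ('X^g - 1) P by rewrite coprimep_sym (coprimep_dvdl dgm).
  have : ('X^g - 1 : {poly R}) %| 'X^k - 1.
    by rewrite -(Gauss_dvdpr _ copgP) PE; apply: dvdp_Xn_sub1; rewrite dvdn_gcdr.
  rewrite dvdp_Xn_sub1P // => dgk.
  by apply/eqP; rewrite eqn_dvd dvdn_gcd dvdn_gcdl dgk dmk_mN.
- apply/coprimepP=> d dP dm.
  have dN : d %| 'X^N - 1 by rewrite -PE dvdp_mulr.
  have dk : d %| 'X^k - 1.
    apply: dvdp_trans (dvdp_Xgcdn_sub1 m_gt0 dm dN) _.
    by apply: dvdp_Xn_sub1; rewrite EmN dvdn_gcdr.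
  exact: (coprimepP _ _ copPk).
Qed.

End BinomialDivisibility.

Local Notation F2 := 'F_2.

(* Identities in characteristic 2 are ring identities up to a multiple of 2. *)
Lemma F2_poly_eq (p q w : {poly F2}) : p = q + 2%:R * w -> p = q.
Proof.
have two0 : (2%:R : {poly F2}) = 0.
  by rewrite -polyC_natr; have -> : (2%:R : F2) = 0 by apply/val_inj.
by rewrite two0 mul0r addr0.
Qed.

Definition cyc9 (Z : {poly F2}) : {poly F2} := (1 + Z + Z ^+ 2) * (1 + Z ^+ 3 + Z ^+ 6).

Lemma cyc9_mul_sub1 (Z : {poly F2}) : cyc9 Z * (Z - 1) = Z ^+ 9 - 1.
Proof. by rewrite /cyc9; ring. Qed.

(* P(Z) = 1 mod Z - 1, since P(1) = 9 = 1 in F_2. *)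
Lemma coprimep_cyc9 (Z : {poly F2}) : coprimep (cyc9 Z) (Z - 1).
Proof.
have cyc9E : cyc9 Z = (Z + Z ^+ 3 + Z ^+ 5 + Z ^+ 7) * (Z - 1) + 1.
  by apply: (F2_poly_eq (w := Z + Z ^+ 3 + Z ^+ 5 + Z ^+ 7)); rewrite /cyc9; ring.
by rewrite coprimep_sym cyc9E coprimep_addl_mul coprimep1.
Qed.

Lemma cpoly_comp_mul_X6 (m : nat) (Z : {poly F2}) : (6 <= m)%N ->
  (cpoly m \Po Z) * Z ^+ 6 =
  (1 + Z + Z ^+ 2) ^+ 2 * cyc9 Z + (1 + Z + Z ^+ 4 + Z ^+ 5) * (Z ^+ m - 1).
Proof.
move=> m_ge6; have [n ->] : exists n, m = (n + 6)%N by exists (m - 6)%N; lia.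
rewrite /cpoly !big_cons big_nil addr0 !comp_polyD !comp_Xn_poly -polyC1 comp_polyC.
have -> : (n + 6 - 1 = n + 5)%N by lia.
have -> : (n + 6 - 2 = n + 4)%N by lia.
have -> : (n + 6 - 5 = n + 1)%N by lia.
rewrite addnK !exprD /cyc9 polyC1.
apply: (F2_poly_eq (w := - (Z + 3%:R * Z ^+ 2 + 4%:R * (Z ^+ 3 + Z ^+ 4 + Z ^+ 5
    + Z ^+ 6 + Z ^+ 7 + Z ^+ 8 + Z ^+ 9) + 3%:R * Z ^+ 10 + Z ^+ 11))).
ring.
Qed.

Lemma coprimep_cpoly_comp (m k : nat) : (6 <= m)%N ->
  coprimep (cpoly m \Po 'X^k) ('X^m - 1) = coprimep (cyc9 'X^k) ('X^m - 1).
Proof.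
move=> m_ge6; have m_gt0 : (0 < m)%N by lia.
have copX6 : coprimep (('X^k : {poly F2}) ^+ 6) ('X^m - 1).
  by rewrite -exprM coprimep_Xn_Xm_sub1.
have [S SE] : exists S, (('X^k : {poly F2}) ^+ m - 1) = S * ('X^m - 1).
  by apply/dvdpP; rewrite -exprM mulnC dvdp_Xn_sub1_mul.
rewrite -[LHS]andbT -copX6 -coprimepMl cpoly_comp_mul_X6 // SE [_ * (S * _)]mulrA addrC.
rewrite coprimep_sym coprimep_addl_mul coprimep_sym.
by rewrite coprimepMl coprimep_pexpl // /cyc9 coprimepMl andbA andbb.
Qed.

Theorem proposition4 (m k : nat) (hm : (13 <= m)%N) (hk : (1 <= k)%N) :
  coprimep (cpoly m \Po 'X^k) ('X^m - 1) <-> gcdn m (3 * k) = gcdn m k.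
Proof.
have m_ge6 : (6 <= m)%N by lia.
have m_gt0 : (0 < m)%N by lia.
have cyc9_quot : cyc9 'X^k * ('X^k - 1) = 'X^(9 * k) - 1.
  by rewrite cyc9_mul_sub1 -exprM mulnC.
have k_dvd_9k : (k %| 9 * k)%N by rewrite dvdn_mull.
rewrite coprimep_cpoly_comp //.
rewrite (coprimep_cyclotomic_quotient m_gt0 k_dvd_9k cyc9_quot (coprimep_cyc9 _)).
by rewrite -(gcdn_mul_sqr m 3 k) mulnA; split=> /eqP.
Qed.
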